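(* Let $k\in\{-1,0,1\}$ and let $a$ be a regular scale factor (extended evenly to negative arguments) with finite particle horizon, i.e. $\int_0^\tau\frac{dt}{a(t)}<\infty$ for $\tau>0$. Then for every $\tau_0>0$, $\lim_{(\tau,t_0)\to(\tau_0,0)}a^2(t_0)S_k^2(\chi_{|t_0|}(\tau))=0$; consequently, defining $g_{\theta\theta}$ and $g_{\phi\phi}$ at points with $\rho=\rho_{\mathcal M_\tau}$ by these limits, $g_{\theta\theta}(\tau,\rho)$ and $g_{\phi\phi}(\tau,\rho,\theta)$ are continuous on $D_{\mathrm{polar}}$ and vanish at $(\tau,\rho_{\mathcal M_\tau})$.
   Context: A function $a:[0,\infty)\to[0,\infty)$ is a regular scale factor if: (a) $a(0)=0$; (b) $a$ is increasing and continuous on $[0,\infty)$, twice continuously differentiable on $(0,\infty)$, with an inverse function on $[0,\infty)$; (c) $\frac{a(t)\ddot a(t)}{\dot a(t)^2}\le1$ for all $t>0$ (presupposing $\dot a(t)\ne0$). Extend $a$ by $a(-t)=a(t)$. $S_1=\sin$, $S_0(\chi)=\chi$, $S_{-1}=\sinh$. For $0<s<\tau$, $\chi_s(\tau)=\int_s^\tau\frac{1}{a(t)}\frac{a(\tau)}{\sqrt{a^2(\tau)-a^2(t)}}dt$. For $\tau>0$, $\rho_{\mathcal M_\tau}=\int_0^\tau\frac{a(t)}{\sqrt{a^2(\tau)-a^2(t)}}dt$; for $0<\rho<2\rho_{\mathcal M_\tau}$, $t_0(\tau,\rho)$ is the unique $t_0\in(-\tau,\tau)$ with $\rho=\int_{t_0}^\tau\frac{a(t)}{\sqrt{a^2(\tau)-a^2(t)}}dt$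 ($t_0=0$ iff $\rho=\rho_{\mathcal M_\tau}$). Define $f(\tau,t_0)=\int_{t_0}^{\tau}\frac{\ddot a(t)}{\dot a(t)^2}\left(\frac{\sqrt{a^2(\tau)-a^2(t_0)}}{\sqrt{a^2(\tau)-a^2(t)}}-1\right)dt$ for $0\le t_0<\tau$, $f(\tau,t_0)=2f(\tau,0)-f(\tau,-t_0)$ for $-\tau<t_0<0$, and $g_{\tau\tau}(\tau,\rho)=-[1-\dot a(\tau)f(\tau,t_0(\tau,\rho))]^2$. Let $\rho_{\max}(\tau)=\inf\{\rho\in(0,2\rho_{\mathcal M_\tau}):g_{\tau\tau}(\tau,\rho)=0\}$ if this set is nonempty, else $2\rho_{\mathcal M_\tau}$. $D_{\mathrm{polar}}=\{(\tau,\rho,\theta,\phi):\tau>0,\ 0<\rho<\rho_{\max}(\tau),\ \theta\in I_\pi,\ \phi\in I_{2\pi}\}$, with $I_\pi,I_{2\pi}$ open intervals of lengths $\pi,2\pi$. For $t_0(\tau,\rho)\ne0$: $g_{\theta\theta}(\tau,\rho)=a^2(t_0)S_k^2(\chi_{|t_0|}(\tau))$ with $t_0=t_0(\tau,\rho)$, and $g_{\phi\phi}(\tau,\rho,\theta)=g_{\theta\theta}(\tau,\rho)\sin^2\theta$ (angular metric coefficients of the extended Robertson–Walker metric $ds^2=g_{\tau\tau}d\tau^2+d\rho^2+g_{\theta\theta}d\theta^2+g_{\phi\phi}d\phi^2$ in Fermi polar coordinates). *)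

From Stdlib Require Import Reals Lra ZArith ClassicalEpsilon.
From Coquelicot Require Import Coquelicot.
Open Scope R_scope.

Definition sinhR (x : R) : R := (exp x - exp (- x)) / 2.
Definition Sk (k : Z) (x : R) : R :=
  match k with
  | 1%Z => sin x
  | 0%Z => x
  | _ => sinhR x
  end.

(* Regular scale factor.  [a : R -> R] is already the even extension,
   a(-t) = a(t). *)
Definition regular_scale_factor (a : R -> R) : Prop :=
  a 0 = 0 /\
  (forall t, a (- t) = a t) /\
  (forall s t, 0 <= s -> s < t -> a s < a t) /\
  (forall t, 0 <= t ->
     filterlim a (within (fun x => 0 <= x) (locally t)) (locally (a t))) /\
  (forall t, 0 < t ->
     ex_derive a t /\ ex_derive (Derive a) t /\
     continuous (Derive (Derive a)) t) /\
  (* (b) has an inverse function on [0,oo): a maps [0,oo) onto [0,oo) *)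
  (forall y, 0 <= y -> exists t, 0 <= t /\ a t = y) /\
  (forall t, 0 < t ->
     Derive a t <> 0 /\
     a t * Derive (Derive a) t / (Derive a t) ^ 2 <= 1).

Definition finite_particle_horizon (a : R -> R) : Prop :=
  forall tau, 0 < tau -> ex_RInt_gen (fun t => / a t) (at_right 0) (at_point tau).

Definition impint (f : R -> R) (lo hi : R) : R :=
  RInt_gen f (at_right lo) (at_left hi).

Definition chi (a : R -> R) (s tau : R) : R :=
  impint (fun t => / a t * (a tau / sqrt (a tau ^ 2 - a t ^ 2))) s tau.

Definition rho_of (a : R -> R) (tau t0 : R) : R :=
  impint (fun t => a t / sqrt (a tau ^ 2 - a t ^ 2)) t0 tau.

Definition rhoM (a : R -> R) (tau : R) : R := rho_of a tau 0.

Definition t0fun (a : R -> R) (tau rho : R) : R :=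
  epsilon (inhabits 0) (fun t0 => - tau < t0 < tau /\ rho_of a tau t0 = rho).

Definition f_pos (a : R -> R) (tau t0 : R) : R :=
  impint (fun t => Derive (Derive a) t / (Derive a t) ^ 2 *
                   (sqrt (a tau ^ 2 - a t0 ^ 2) / sqrt (a tau ^ 2 - a t ^ 2) - 1))
         t0 tau.

Definition f_fun (a : R -> R) (tau t0 : R) : R :=
  if Rle_dec 0 t0 then f_pos a tau t0
  else 2 * f_pos a tau 0 - f_pos a tau (- t0).

Definition g_tautau (a : R -> R) (tau rho : R) : R :=
  - (1 - Derive a tau * f_fun a tau (t0fun a tau rho)) ^ 2.

Definition rho_max_set (a : R -> R) (tau : R) : R -> Prop :=
  fun rho => 0 < rho < 2 * rhoM a tau /\ g_tautau a tau rho = 0.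

Definition rho_max (a : R -> R) (tau : R) : R :=
  if excluded_middle_informative (exists rho, rho_max_set a tau rho)
  then real (Glb_Rbar (rho_max_set a tau))
  else 2 * rhoM a tau.

Definition D_polar (a : R -> R) (th1 ph1 : R) (p : R * R * R * R) : Prop :=
  let '(tau, rho, theta, phi) := p in
  0 < tau /\ 0 < rho < rho_max a tau /\
  th1 < theta < th1 + PI /\ ph1 < phi < ph1 + 2 * PI.

(* Angular metric coefficients, extended at t0 = 0 (i.e. rho = rho_M)
   by the limit value 0. *)
Definition g_thth (a : R -> R) (k : Z) (tau rho : R) : R :=
  let t0 := t0fun a tau rho in
  if Req_EM_T t0 0 then 0
  else (a t0) ^ 2 * (Sk k (chi a (Rabs t0) tau)) ^ 2.

Definition g_phph (a : R -> R) (k : Z) (tau rho theta : R) : R :=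
  g_thth a k tau rho * (sin theta) ^ 2.

From Stdlib Require Import Reals Lra ZArith ClassicalEpsilon FunctionalExtensionality.
From Coquelicot Require Import Coquelicot.
Open Scope R_scope.

(* The singular integrals [int_t0^x h(t) dt / sqrt (a(x)^2 - a(t)^2)] defining [rho] and
   [chi] become proper after the substitution [t = x - w^2]: the integrand turns into
   [2 h(x - w^2) / sqrt q(x, w)], where [q(x, w) = (a(x)^2 - a(x - w^2)^2) / w^2] extends
   continuously and positively to [w = 0] by [2 a(x) a'(x)]. Hence [rho] and [chi] are
   jointly continuous functions of [x] and [W = sqrt (x - t0)]. Since [a > 0] away from 0,
   [rho] is strictly increasing in [W], so [t0(tau, rho)] is continuous, and evenness of [a]
   makes [rho] symmetric about [t0 = 0], which gives [t0(tau, rho_M) = 0].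
   Near [(tau0, 0)] the finite particle horizon bounds [chi_{|t0|}(tau)] by
   [chi_c(tau) + K int_{|t0|}^c dt / a(t)], so [S_k(chi)] stays bounded while [a(t0) -> 0].
   This is the limit, and it makes [g_thth] continuous where [t0 = 0]; elsewhere [g_thth]
   is a composition of continuous maps. *)

Lemma continuous_R_eps (f : R -> R) x :
  continuous f x <->
  forall eps, 0 < eps -> exists d, 0 < d /\
    forall y, Rabs (y - x) < d -> Rabs (f y - f x) < eps.
Proof.
  split.
  - intros Hf eps Heps.
    destruct (proj1 (filterlim_locally _ _) Hf (mkposreal eps Heps)) as [d Hd].
    exists d; split; [apply cond_pos | intros y Hy; exact (Hd y Hy)].
  - intros H; apply filterlim_locally; intros eps.
    destruct (H eps (cond_pos eps)) as [d [Hd Hy]].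
    exists (mkposreal d Hd); intros y; apply Hy.
Qed.

Lemma continuous_R2_eps (F : R * R -> R) x w :
  continuous F (x, w) <->
  forall eps, 0 < eps -> exists d, 0 < d /\
    forall y v, Rabs (y - x) < d -> Rabs (v - w) < d ->
      Rabs (F (y, v) - F (x, w)) < eps.
Proof.
  split.
  - intros HF eps Heps.
    destruct (proj1 (filterlim_locally _ _) HF (mkposreal eps Heps)) as [d Hd].
    exists d; split; [apply cond_pos | intros y v Hy Hv; exact (Hd (y, v) (conj Hy Hv))].
  - intros H; apply filterlim_locally; intros eps.
    destruct (H eps (cond_pos eps)) as [d [Hd Hyv]].
    exists (mkposreal d Hd); intros [y v] [Hy Hv]; now apply Hyv.
Qed.

Lemma continuous_slice (G : R -> R -> R) x w :
  continuous (fun p : R * R => G (fst p) (snd p)) (x, w) -> continuous (G x) w.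
Proof.
  intros H. apply continuous_R_eps. intros eps Heps.
  destruct (proj1 (continuous_R2_eps _ _ _) H eps Heps) as [d [Hd Hc]].
  exists d; split; [exact Hd|]. intros v Hv.
  apply (Hc x v); [rewrite Rminus_eq_0, Rabs_R0 |]; assumption.
Qed.

Section ContinuityRules.
Context {U : UniformSpace}.
Implicit Types f g : U -> R.

Lemma continuous_Rmult f g x :
  continuous f x -> continuous g x -> continuous (fun y => f y * g y) x.
Proof. apply (@continuous_mult U R_AbsRing). Qed.

Lemma continuous_Rplus f g x :
  continuous f x -> continuous g x -> continuous (fun y => f y + g y) x.
Proof. apply (@continuous_plus U R_AbsRing R_NormedModule). Qed.

Lemma continuous_Rminus f g x :
  continuous f x -> continuous g x -> continuous (fun y => f y - g y) x.
Proof.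
  intros Hf Hg. apply (continuous_Rplus f (fun y => - g y)); [exact Hf|].
  now apply (@continuous_opp U R_AbsRing R_NormedModule).
Qed.

Lemma continuous_Rcomp f (h : R -> R) x :
  continuous f x -> continuous h (f x) -> continuous (fun y => h (f y)) x.
Proof. apply (@continuous_comp U R_UniformSpace R_UniformSpace). Qed.

Lemma continuous_Rinv_comp f x :
  continuous f x -> f x <> 0 -> continuous (fun y => / f y) x.
Proof. intros Hf Hx. apply (continuous_Rcomp f Rinv); [exact Hf | now apply continuous_Rinv]. Qed.

Lemma continuous_Rdiv f g x :
  continuous f x -> continuous g x -> g x <> 0 -> continuous (fun y => f y / g y) x.
Proof. intros Hf Hg Hx. apply continuous_Rmult; [exact Hf | now apply continuous_Rinv_comp]. Qed.

Lemma continuous_sqrt_comp f x : continuous f x -> continuous (fun y => sqrt (f y)) x.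
Proof. intros Hf. apply (continuous_Rcomp f sqrt); [exact Hf | apply continuous_sqrt]. Qed.

Lemma continuous_pow f (n : nat) x : continuous f x -> continuous (fun y => f y ^ n) x.
Proof.
  intros Hf. apply (continuous_Rcomp f (fun z => z ^ n)); [exact Hf|].
  apply (@ex_derive_continuous R_AbsRing R_NormedModule). auto_derive. exact I.
Qed.

End ContinuityRules.

Lemma continuous_fst_R2 (p : R * R) : continuous (fun q : R * R => fst q) p.
Proof. destruct p; apply continuous_fst. Qed.

Lemma continuous_snd_R2 (p : R * R) : continuous (fun q : R * R => snd q) p.
Proof. destruct p; apply continuous_snd. Qed.

Lemma ex_RInt_continuous_R (f : R -> R) a b :
  (forall z, Rmin a b <= z <= Rmax a b -> continuous f z) -> ex_RInt f a b.
Proof. apply (@ex_RInt_continuous R_CompleteNormedModule). Qed.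

Lemma Rabs_le_of_between_0 z v : Rmin 0 v <= z <= Rmax 0 v -> Rabs z <= Rabs v.
Proof. unfold Rmin, Rmax, Rabs; destruct Rle_dec, Rcase_abs, Rcase_abs; lra. Qed.

Lemma Rabs_lt_of_close v W0 Wm : Rabs (v - W0) < Wm - Rabs W0 -> Rabs v <= Wm.
Proof. intros H. pose proof (Rabs_triang_inv v W0). lra. Qed.

Lemma uniform_near_slice (G : R -> R -> R) x0 Wm eta : 0 < eta ->
  (forall w, Rabs w <= Wm -> continuous (fun p : R * R => G (fst p) (snd p)) (x0, w)) ->
  exists delta, 0 < delta /\ forall y v, Rabs (y - x0) < delta -> Rabs v <= Wm ->
    Rabs (G y v - G x0 v) < eta.
Proof.
  intros Heta Hcont.
  destruct (uniform_continuity_2d_1d' G (- Wm) Wm x0) with (eps := mkposreal eta Heta)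
    as [delta Htube].
  { intros w Hw. apply continuity_2d_pt_filterlim, Hcont, Rabs_le. lra. }
  exists delta. split; [apply cond_pos|]. intros y v Hy Hv.
  apply Rabs_le_between in Hv. apply Rabs_lt_between' in Hy.
  apply (Htube v x0 v y); try lra. rewrite Rminus_eq_0, Rabs_R0. apply cond_pos.
Qed.

Lemma RInt_diff_le (f g : R -> R) v M : ex_RInt f 0 v -> ex_RInt g 0 v ->
  (forall t, Rmin 0 v <= t <= Rmax 0 v -> Rabs (f t - g t) <= M) ->
  Rabs (RInt f 0 v - RInt g 0 v) <= Rabs v * M.
Proof.
  intros Hf Hg Hfg.
  assert (Hmin : RInt (fun t => f t - g t) 0 v = RInt f 0 v - RInt g 0 v)
    by exact (RInt_minus f g 0 v Hf Hg).
  rewrite <- Hmin. replace (Rabs v) with (Rabs (v - 0)) by (now rewrite Rminus_0_r).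
  apply (norm_RInt_le_const_abs (fun t => f t - g t) 0 v); [exact Hfg|].
  apply (RInt_correct (V := R_CompleteNormedModule)), (ex_RInt_minus (V := R_NormedModule));
    assumption.
Qed.

Lemma continuous_RInt_param (G : R -> R -> R) x0 W0 Wm :
  Rabs W0 < Wm ->
  locally x0 (fun x => forall w, Rabs w <= Wm ->
    continuous (fun p : R * R => G (fst p) (snd p)) (x, w)) ->
  continuous (fun p : R * R => RInt (G (fst p)) 0 (snd p)) (x0, W0).
Proof.
  intros HW0 [d0 Hcont].
  assert (Hx0 : ball x0 d0 x0) by apply ball_center.
  assert (Hex : forall x W, ball x0 d0 x -> Rabs W <= Wm -> ex_RInt (G x) 0 W).
  { intros x W Hx HW. apply ex_RInt_continuous_R. intros z Hz.
    apply continuous_slice, Hcont; [exact Hx|].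
    eapply Rle_trans; [apply Rabs_le_of_between_0, Hz | exact HW]. }
  assert (HWm : 0 < Wm) by (pose proof (Rabs_pos W0); lra).
  apply continuous_R2_eps. intros eps Heps.
  set (eta := eps / (2 * (Wm + 1))).
  assert (Heta : 0 < eta) by (apply Rdiv_lt_0_compat; lra).
  destruct (uniform_near_slice G x0 Wm eta Heta (Hcont x0 Hx0)) as [delta [Hdelta Hslice]].
  assert (HF0 : continuous (fun W => RInt (G x0) 0 W) W0).
  { apply (continuous_RInt_1 (G x0) 0 W0).
    assert (Hr : 0 < Wm - Rabs W0) by lra.
    exists (mkposreal _ Hr). intros z Hz. apply (RInt_correct (G x0) 0 z).
    apply Hex; [exact Hx0 | now apply (Rabs_lt_of_close z W0)]. }
  destruct (proj1 (continuous_R_eps _ _) HF0 (eps / 2)) as [d2 [Hd2 HF]]; [lra|].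
  exists (Rmin (Rmin delta d0) (Rmin d2 (Wm - Rabs W0))).
  split; [repeat apply Rmin_glb_lt; try lra; apply cond_pos|].
  intros y v Hy Hv. simpl.
  apply Rmin_Rgt_l in Hy as [[Hy1 Hy2]%Rmin_Rgt_l _].
  apply Rmin_Rgt_l in Hv as [_ [Hv1 Hv2]%Rmin_Rgt_l].
  apply Rabs_lt_of_close in Hv2.
  assert (Hdiff : Rabs (RInt (G y) 0 v - RInt (G x0) 0 v) <= Rabs v * eta).
  { apply RInt_diff_le; [apply Hex; assumption | apply Hex; assumption |].
    intros t Ht. apply Rlt_le, Hslice; [exact Hy1|].
    eapply Rle_trans; [apply Rabs_le_of_between_0, Ht | exact Hv2]. }
  assert (Hsmall : Rabs v * eta < eps / 2).
  { apply Rle_lt_trans with (Wm * eta); [apply Rmult_le_compat_r; lra|].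
    unfold eta. apply Rmult_lt_reg_r with (2 * (Wm + 1)); [lra|].
    field_simplify; lra. }
  specialize (HF v Hv1).
  replace (RInt (G y) 0 v - RInt (G x0) 0 W0) with
    ((RInt (G y) 0 v - RInt (G x0) 0 v) + (RInt (G x0) 0 v - RInt (G x0) 0 W0)) by ring.
  eapply Rle_lt_trans; [apply Rabs_triang | lra].
Qed.

Lemma RInt_even (f : R -> R) b : (forall t, f (- t) = f t) -> ex_RInt f 0 b ->
  RInt f (- b) 0 = RInt f 0 b.
Proof.
  intros Heven Hex. apply (RInt_correct (V := R_CompleteNormedModule)) in Hex.
  set (I := RInt f 0 b) in *.
  assert (H1 : is_RInt f (- 0) (- - b) I) by (now rewrite Ropp_0, Ropp_involutive).
  apply is_RInt_comp_opp, is_RInt_opp in H1.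
  assert (H2 : is_RInt f 0 (- b) (opp I)).
  { refine (is_RInt_ext _ _ _ _ _ _ H1). intros y _.
    change (- - f (- y) = f y). now rewrite Ropp_involutive, Heven. }
  apply is_RInt_swap in H2. rewrite opp_opp in H2. exact (is_RInt_unique _ _ _ _ H2).
Qed.

Lemma continuous_bracket (F : R -> R -> R) x0 W1 W2 y0 :
  F x0 W1 < y0 < F x0 W2 ->
  continuous (fun p : R * R => F (fst p) (snd p)) (x0, W1) ->
  continuous (fun p : R * R => F (fst p) (snd p)) (x0, W2) ->
  exists d, 0 < d /\ forall x y, Rabs (x - x0) < d -> Rabs (y - y0) < d -> F x W1 < y < F x W2.
Proof.
  intros Hy0 H1 H2.
  set (gap := Rmin (y0 - F x0 W1) (F x0 W2 - y0)).
  assert (Hgap : 0 < gap) by (apply Rmin_glb_lt; lra).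
  assert (Hg1 : gap <= y0 - F x0 W1) by apply Rmin_l.
  assert (Hg2 : gap <= F x0 W2 - y0) by apply Rmin_r.
  destruct (proj1 (continuous_R2_eps _ _ _) H1 (gap / 2)) as [d1 [Hd1 C1]]; [lra|].
  destruct (proj1 (continuous_R2_eps _ _ _) H2 (gap / 2)) as [d2 [Hd2 C2]]; [lra|].
  exists (Rmin (Rmin d1 d2) (gap / 2)). split; [repeat apply Rmin_glb_lt; lra|].
  intros x y [[Hx1 Hx2]%Rmin_Rgt_l _]%Rmin_Rgt_l [_ Hy']%Rmin_Rgt_l.
  specialize (C1 x W1 Hx1 ltac:(rewrite Rminus_eq_0, Rabs_R0; lra)).
  specialize (C2 x W2 Hx2 ltac:(rewrite Rminus_eq_0, Rabs_R0; lra)).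
  simpl in C1, C2. apply Rabs_lt_between' in C1, C2, Hy'. lra.
Qed.

Lemma Sk_continuous k y : continuous (Sk k) y.
Proof.
  unfold Sk. destruct k as [| [p | p |] | p]; try apply continuous_id; try apply continuous_sin;
    unfold sinhR; apply (@ex_derive_continuous R_AbsRing R_NormedModule); auto_derive; exact I.
Qed.

Lemma Sk_sqr_bounded k B : exists C, 0 <= C /\ forall y, Rabs y <= B -> Sk k y ^ 2 <= C.
Proof.
  destruct (continuity_ab_maj (fun y => Sk k y ^ 2) (- Rabs B) (Rabs B)) as [y0 [Hy0 _]].
  - pose proof (Rabs_pos B). lra.
  - intros y _. apply continuity_pt_filterlim, continuous_pow, Sk_continuous.
  - exists (Sk k y0 ^ 2). split; [apply pow2_ge_0|].
    intros y Hy. apply Hy0. pose proof (RRle_abs B). apply Rabs_le_between in Hy. lra.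
Qed.

Section ScaleFactor.
Variable a : R -> R.
Hypothesis Ha : regular_scale_factor a.

Lemma a_0 : a 0 = 0.
Proof. apply Ha. Qed.

Lemma a_even t : a (- t) = a t.
Proof. apply Ha. Qed.

Lemma a_abs t : a (Rabs t) = a t.
Proof. unfold Rabs; destruct Rcase_abs; [apply a_even | reflexivity]. Qed.

Lemma a_lt_abs s t : Rabs s < Rabs t -> a s < a t.
Proof.
  intros Hst. rewrite <- (a_abs s), <- (a_abs t).
  destruct Ha as (_ & _ & Hincr & _). apply Hincr; [apply Rabs_pos | exact Hst].
Qed.

Lemma a_le_abs s t : Rabs s <= Rabs t -> a s <= a t.
Proof.
  intros [Hlt | Heq]; [now left; apply a_lt_abs |].
  right; now rewrite <- (a_abs s), <- (a_abs t), Heq.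
Qed.

Lemma a_pos t : t <> 0 -> 0 < a t.
Proof.
  intros Ht. rewrite <- a_0. apply a_lt_abs. rewrite Rabs_R0. now apply Rabs_pos_lt.
Qed.

Lemma a_ge0 t : 0 <= a t.
Proof. rewrite <- a_0. apply a_le_abs. rewrite Rabs_R0. apply Rabs_pos. Qed.

Lemma a_sqr_lt s t : Rabs s < Rabs t -> a s ^ 2 < a t ^ 2.
Proof. intros Hst. pose proof (a_lt_abs s t Hst). pose proof (a_ge0 s). nra. Qed.

(* Continuity on [0, oo) transfers to R through a = a o Rabs. *)
Lemma a_continuous t : continuous a t.
Proof.
  destruct Ha as (_ & _ & _ & Hc & _).
  apply continuous_R_eps. intros eps Heps.
  destruct (Hc (Rabs t) (Rabs_pos t) (ball (a (Rabs t)) (mkposreal eps Heps)))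
    as [d Hd]; [apply locally_ball|].
  exists d; split; [apply cond_pos|]. intros y Hy.
  rewrite <- (a_abs y), <- (a_abs t). apply (Hd (Rabs y)); [|apply Rabs_pos].
  eapply Rle_lt_trans; [apply Rabs_triang_inv2 | exact Hy].
Qed.

Lemma ex_derive_a t : 0 < t -> ex_derive a t.
Proof. intros Ht. destruct Ha as (_ & _ & _ & _ & Hd & _). apply (Hd t Ht). Qed.

Lemma Derive_a_continuous t : 0 < t -> continuous (Derive a) t.
Proof.
  intros Ht. destruct Ha as (_ & _ & _ & _ & Hd & _).
  apply (@ex_derive_continuous R_AbsRing R_NormedModule), (Hd t Ht).
Qed.

Lemma Derive_a_pos t : 0 < t -> 0 < Derive a t.
Proof.
  intros Ht.
  assert (Hnz : Derive a t <> 0) by (destruct Ha as (_ & _ & _ & _ & _ & _ & Hc); apply (Hc t Ht)).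
  destruct (Rle_or_lt (Derive a t) 0) as [Hneg | Hpos]; [exfalso | exact Hpos].
  assert (Hlt : Derive a t < 0) by lra.
  pose proof (proj1 (is_derive_Reals _ _ _) (Derive_correct a t (ex_derive_a t Ht))) as D.
  destruct (D (- Derive a t / 2)) as [d Hd]; [lra|].
  set (h := Rmin (d / 2) 1).
  assert (Hh : 0 < h) by (apply Rmin_glb_lt; [pose proof (cond_pos d) |]; lra).
  assert (Hhd : Rabs h < d).
  { rewrite Rabs_pos_eq by lra. eapply Rle_lt_trans; [apply Rmin_l |].
    pose proof (cond_pos d); lra. }
  specialize (Hd h ltac:(lra) Hhd).
  assert (Hq : 0 < (a (t + h) - a t) / h).
  { apply Rdiv_lt_0_compat; [|exact Hh].
    enough (a t < a (t + h)) by lra.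
    apply a_lt_abs. rewrite !Rabs_pos_eq; lra. }
  apply Rabs_def2 in Hd. lra.
Qed.

Lemma is_derive_a_sqr t : 0 < t -> is_derive (fun t => a t ^ 2) t (2 * a t * Derive a t).
Proof.
  intros Ht. pose proof (Derive_correct a t (ex_derive_a t Ht)) as D.
  apply (is_derive_ext (fun t => a t * a t)); [intros; simpl; ring|].
  replace (2 * a t * Derive a t) with (Derive a t * a t + a t * Derive a t) by ring.
  apply (is_derive_mult a a); auto. intros; apply Rmult_comm.
Qed.

Definition sq_slope (x w : R) : R :=
  if Req_EM_T w 0 then 2 * a x * Derive a x
  else (a x ^ 2 - a (x - w ^ 2) ^ 2) / w ^ 2.

Lemma sq_slope_nonzero x w : w <> 0 ->
  sq_slope x w = (a x ^ 2 - a (x - w ^ 2) ^ 2) / w ^ 2.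
Proof. intros Hw; unfold sq_slope; destruct Req_EM_T; [contradiction | reflexivity]. Qed.

Lemma Rabs_sub_sqr_lt x w : 0 < x -> w <> 0 -> w ^ 2 < 2 * x -> Rabs (x - w ^ 2) < Rabs x.
Proof.
  intros Hx Hw Hw2. assert (0 < w ^ 2) by (apply pow2_gt_0, Hw).
  rewrite (Rabs_pos_eq x) by lra. apply Rabs_lt_between. lra.
Qed.

Lemma sq_slope_pos x w : 0 < x -> w ^ 2 < 2 * x -> 0 < sq_slope x w.
Proof.
  intros Hx Hw. destruct (Req_dec w 0) as [-> | Hw0].
  - unfold sq_slope; destruct Req_EM_T; [|congruence].
    pose proof (a_pos x ltac:(lra)). pose proof (Derive_a_pos x Hx). nra.
  - rewrite sq_slope_nonzero by exact Hw0.
    apply Rdiv_lt_0_compat; [|now apply pow2_gt_0].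
    pose proof (a_sqr_lt _ _ (Rabs_sub_sqr_lt x w Hx Hw0 Hw)). lra.
Qed.

Lemma sq_slope_mean_value x w : 0 < x - w ^ 2 ->
  exists c, x - w ^ 2 <= c <= x /\ sq_slope x w = 2 * a c * Derive a c.
Proof.
  intros Hxw. destruct (Req_dec w 0) as [-> | Hw0].
  - exists x. unfold sq_slope; destruct Req_EM_T; [|congruence]. split; [simpl; lra | reflexivity].
  - assert (Hw2 : 0 < w ^ 2) by (apply pow2_gt_0, Hw0).
    destruct (MVT_gen (fun t => a t ^ 2) (x - w ^ 2) x (fun t => 2 * a t * Derive a t))
      as [c [Hc Hmvt]].
    { intros t Ht. apply is_derive_a_sqr. rewrite Rmin_left in Ht by lra. lra. }
    { intros t _. apply continuity_pt_filterlim, continuous_pow, a_continuous. }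
    rewrite Rmin_left, Rmax_right in Hc by lra.
    exists c. split; [exact Hc|]. rewrite sq_slope_nonzero, Hmvt by exact Hw0.
    field. lra.
Qed.

Lemma sq_slope_continuous_0 x : 0 < x ->
  continuous (fun p : R * R => sq_slope (fst p) (snd p)) (x, 0).
Proof.
  intros Hx. apply continuous_R2_eps. intros eps Heps.
  assert (Hg : continuous (fun t => 2 * a t * Derive a t) x).
  { apply continuous_Rmult; [apply continuous_Rmult|].
    - apply continuous_const.
    - apply a_continuous.
    - apply Derive_a_continuous, Hx. }
  destruct (proj1 (continuous_R_eps _ _) Hg eps Heps) as [d1 [Hd1 Hc]].
  exists (Rmin (Rmin (d1 / 2) (x / 4)) 1). split; [repeat apply Rmin_glb_lt; lra|].
  intros y v [[Hy1 Hy2]%Rmin_Rgt_l _]%Rmin_Rgt_l [[Hv1 Hv2]%Rmin_Rgt_l Hv3]%Rmin_Rgt_l.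
  cbn [fst snd]. rewrite Rminus_0_r in Hv1, Hv2, Hv3.
  assert (Hvv : v ^ 2 <= Rabs v) by (rewrite <- pow2_abs; pose proof (Rabs_pos v); nra).
  apply Rabs_lt_between' in Hy1, Hy2.
  destruct (sq_slope_mean_value y v) as [c [Hcy ->]]; [pose proof (pow2_ge_0 v); lra|].
  replace (sq_slope x 0) with (2 * a x * Derive a x)
    by (unfold sq_slope; destruct Req_EM_T; [reflexivity | congruence]).
  apply Hc, Rabs_lt_between'. lra.
Qed.

Lemma sq_slope_continuous x w : 0 < x ->
  continuous (fun p : R * R => sq_slope (fst p) (snd p)) (x, w).
Proof.
  intros Hx. destruct (Req_dec w 0) as [-> | Hw]; [now apply sq_slope_continuous_0|].
  apply continuous_ext_loc with
    (g := fun p : R * R => (a (fst p) ^ 2 - a (fst p - snd p ^ 2) ^ 2) / snd p ^ 2).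
  - assert (Hw' : 0 < Rabs w) by (apply Rabs_pos_lt, Hw).
    exists (mkposreal _ Hw'). intros [y v] [_ Hv]. simpl in *.
    rewrite sq_slope_nonzero; [reflexivity|].
    intros ->. change (Rabs (0 - w) < Rabs w) in Hv.
    rewrite Rminus_0_l, Rabs_Ropp in Hv. lra.
  - apply continuous_Rdiv; [apply continuous_Rminus; apply continuous_pow| |].
    + apply continuous_Rcomp; [apply continuous_fst_R2 | apply a_continuous].
    + apply continuous_Rcomp; [|apply a_continuous].
      apply continuous_Rminus; [apply continuous_fst_R2 |].
      apply continuous_pow, continuous_snd_R2.
    + apply continuous_pow, continuous_snd_R2.
    + exact (pow_nonzero w 2 Hw).
Qed.

Definition sing_integrand (h : R -> R -> R) (x t : R) : R :=
  h x t / sqrt (a x ^ 2 - a t ^ 2).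

(* [t = x - w^2] turns [sing_integrand h x] into this integrand, regular at [w = 0]. *)
Definition subst_integrand (h : R -> R -> R) (x w : R) : R :=
  2 * h x (x - w ^ 2) / sqrt (sq_slope x w).

Definition subst_integral (h : R -> R -> R) (x W : R) : R :=
  RInt (subst_integrand h x) 0 W.

Lemma subst_integral_0 h x : subst_integral h x 0 = 0.
Proof. apply (RInt_point 0 (subst_integrand h x)). Qed.

Lemma sqrt_sq_slope x w : w <> 0 -> 0 < a x ^ 2 - a (x - w ^ 2) ^ 2 ->
  sqrt (sq_slope x w) = sqrt (a x ^ 2 - a (x - w ^ 2) ^ 2) / Rabs w.
Proof.
  intros Hw HD. rewrite sq_slope_nonzero, <- (pow2_abs w) by exact Hw.
  assert (Hpos : 0 < Rabs w) by (apply Rabs_pos_lt, Hw).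
  rewrite sqrt_div_alt by (apply pow_lt, Hpos).
  now rewrite sqrt_pow2 by lra.
Qed.

Section Substitution.
Variables (h : R -> R -> R) (c : R).
Hypothesis Hc : 0 < c <= 2.
Hypothesis Hh : forall x t, 0 < x -> (1 - c) * x < t -> continuous (h x) t.
Hypothesis Hh_diag : forall x w, 0 < x -> w ^ 2 < c * x ->
  continuous (fun p : R * R => h (fst p) (fst p - snd p ^ 2)) (x, w).

Lemma continuous_subst_integrand x w : 0 < x -> w ^ 2 < c * x ->
  continuous (fun p : R * R => subst_integrand h (fst p) (snd p)) (x, w).
Proof.
  intros Hx Hw. apply continuous_Rdiv.
  - apply continuous_Rmult; [apply continuous_const | now apply Hh_diag].
  - apply continuous_sqrt_comp, sq_slope_continuous, Hx.
  - assert (c * x <= 2 * x) by nra.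
    apply Rgt_not_eq, sqrt_lt_R0, sq_slope_pos; simpl; lra.
Qed.

Lemma ex_RInt_subst_integrand x W1 W2 : 0 < x -> 0 <= W1 <= W2 -> W2 ^ 2 < c * x ->
  ex_RInt (subst_integrand h x) W1 W2.
Proof.
  intros Hx HW HW2. apply ex_RInt_continuous_R. intros z Hz.
  rewrite Rmin_left, Rmax_right in Hz by lra.
  apply continuous_slice, continuous_subst_integrand; [exact Hx|].
  assert (z ^ 2 <= W2 ^ 2) by (apply pow_incr; lra). lra.
Qed.

Lemma subst_integral_sub x W1 W2 : 0 < x -> 0 <= W1 <= W2 -> W2 ^ 2 < c * x ->
  subst_integral h x W2 - subst_integral h x W1 = RInt (subst_integrand h x) W1 W2.
Proof.
  intros Hx HW HW2. unfold subst_integral.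
  assert (HW1 : W1 ^ 2 <= W2 ^ 2) by (apply pow_incr; lra).
  rewrite <- (RInt_Chasles _ 0 W1 W2).
  - change (plus ?A ?B) with (A + B). ring.
  - apply ex_RInt_subst_integrand; lra.
  - apply ex_RInt_subst_integrand; lra.
Qed.

Lemma continuous_subst_integral x0 W0 : 0 < x0 -> W0 ^ 2 < c * x0 ->
  continuous (fun p : R * R => subst_integral h (fst p) (snd p)) (x0, W0).
Proof.
  intros Hx0 HW0. unfold subst_integral.
  set (s := sqrt (c * x0)).
  assert (Hs2 : s ^ 2 = c * x0) by (apply pow2_sqrt; nra).
  assert (Hs : 0 < s) by (apply sqrt_lt_R0; nra).
  assert (HaW : Rabs W0 < s).
  { rewrite <- (Rabs_pos_eq s) by lra. apply Rsqr_lt_abs_0. unfold Rsqr. nra. }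
  set (Wm := (Rabs W0 + s) / 2).
  assert (HWm : Wm ^ 2 < c * x0).
  { rewrite <- Hs2. pose proof (Rabs_pos W0).
    assert (0 <= Wm < s) by (unfold Wm; lra). nra. }
  apply (continuous_RInt_param (subst_integrand h) x0 W0 Wm); [unfold Wm; lra|].
  assert (Hd0 : 0 < (c * x0 - Wm ^ 2) / (2 * c)) by (apply Rdiv_lt_0_compat; lra).
  exists (mkposreal _ Hd0). intros x Hx w Hw. simpl in Hx.
  apply Rabs_lt_between' in Hx.
  assert (Hcx : c * ((c * x0 - Wm ^ 2) / (2 * c)) = (c * x0 - Wm ^ 2) / 2) by (field; lra).
  assert (Hw2 : w ^ 2 <= Wm ^ 2).
  { rewrite <- (pow2_abs w). apply pow_incr. split; [apply Rabs_pos | exact Hw]. }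
  apply continuous_subst_integrand; nra.
Qed.

Lemma continuous_sing_integrand x t : 0 < x -> (1 - c) * x < t < x ->
  continuous (sing_integrand h x) t.
Proof.
  intros Hx Ht. apply continuous_Rdiv.
  - apply Hh; lra.
  - apply continuous_sqrt_comp, continuous_Rminus;
      [apply continuous_const | apply continuous_pow, a_continuous].
  - apply Rgt_not_eq, sqrt_lt_R0. enough (a t ^ 2 < a x ^ 2) by lra.
    apply a_sqr_lt. rewrite (Rabs_pos_eq x) by lra. apply Rabs_lt_between. nra.
Qed.

Lemma is_RInt_subst x W1 W2 : 0 < x -> 0 < W1 <= W2 -> W2 ^ 2 < c * x ->
  is_RInt (subst_integrand h x) W1 W2
    (RInt (sing_integrand h x) (x - W2 ^ 2) (x - W1 ^ 2)).
Proof.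
  intros Hx HW HW2.
  assert (Hrange : forall y, W1 <= y <= W2 -> (1 - c) * x < x - y ^ 2 < x).
  { intros y Hy. assert (y ^ 2 <= W2 ^ 2) by (apply pow_incr; lra).
    assert (0 < y ^ 2) by (apply pow_lt; lra). lra. }
  assert (Hex : ex_RInt (sing_integrand h x) (x - W1 ^ 2) (x - W2 ^ 2)).
  { apply ex_RInt_swap, ex_RInt_continuous_R. intros z Hz.
    destruct (Hrange W1) as [_ H1]; [lra|]. destruct (Hrange W2) as [H2 _]; [lra|].
    assert (W1 ^ 2 <= W2 ^ 2) by (apply pow_incr; lra).
    apply continuous_sing_integrand; [exact Hx|].
    rewrite Rmin_left, Rmax_right in Hz by lra. lra. }
  pose proof (is_RInt_comp (sing_integrand h x) (fun y => x - y ^ 2) (fun y => - 2 * y) W1 W2)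
    as Hcomp.
  rewrite Rmin_left, Rmax_right in Hcomp by lra.
  specialize (Hcomp (fun y Hy => continuous_sing_integrand _ _ Hx (Hrange y Hy))).
  assert (Hg : forall z : R,
    is_derive (fun y => x - y ^ 2) z (- 2 * z) /\ continuous (fun y => - 2 * y) z).
  { intros z. split; [auto_derive; [exact I | ring]|].
    apply continuous_Rmult; [apply continuous_const | apply continuous_id]. }
  specialize (Hcomp (fun y _ => Hg y)).
  apply is_RInt_opp in Hcomp.
  rewrite (opp_RInt_swap (sing_integrand h x)) in Hcomp by exact Hex.
  refine (is_RInt_ext _ _ W1 W2 _ _ Hcomp). intros y Hy.
  rewrite Rmin_left, Rmax_right in Hy by lra.
  change (- (- 2 * y * sing_integrand h x (x - y ^ 2)) = subst_integrand h x y).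
  assert (HD : 0 < a x ^ 2 - a (x - y ^ 2) ^ 2).
  { enough (a (x - y ^ 2) ^ 2 < a x ^ 2) by lra.
    apply a_sqr_lt. rewrite (Rabs_pos_eq x) by lra.
    apply Rabs_lt_between. destruct (Hrange y) as [H1 H2]; [lra|]. nra. }
  unfold sing_integrand, subst_integrand.
  rewrite sqrt_sq_slope, Rabs_pos_eq by lra.
  pose proof (sqrt_lt_R0 _ HD). field. lra.
Qed.

Lemma RInt_sing_integrand x u v : 0 < x -> (1 - c) * x < u <= v -> v < x ->
  RInt (sing_integrand h x) u v =
  subst_integral h x (sqrt (x - u)) - subst_integral h x (sqrt (x - v)).
Proof.
  intros Hx Hu Hv.
  assert (HW1 : 0 < sqrt (x - v)) by (apply sqrt_lt_R0; lra).
  assert (HW12 : sqrt (x - v) <= sqrt (x - u)) by (apply sqrt_le_1_alt; lra).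
  assert (HW2 : sqrt (x - u) ^ 2 < c * x) by (rewrite pow2_sqrt; lra).
  rewrite subst_integral_sub by lra.
  rewrite (is_RInt_unique _ _ _ _ (is_RInt_subst x _ _ Hx (conj HW1 HW12) HW2)).
  rewrite !pow2_sqrt by lra. f_equal; ring.
Qed.

Lemma is_RInt_gen_subst x t0 : 0 < x -> (1 - c) * x < t0 < x ->
  is_RInt_gen (sing_integrand h x) (at_right t0) (at_left x)
    (subst_integral h x (sqrt (x - t0))).
Proof.
  intros Hx Ht0.
  set (Phi u := subst_integral h x (sqrt (x - u))).
  assert (HPhi : forall u, t0 <= u <= x -> continuous Phi u).
  { intros u Hu. apply (continuous_Rcomp (fun u => sqrt (x - u))).
    - apply continuous_sqrt_comp, continuous_Rminus; [apply continuous_const | apply continuous_id].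
    - apply continuous_slice, continuous_subst_integral; [exact Hx|].
      rewrite pow2_sqrt; lra. }
  set (m := (t0 + x) / 2).
  apply filterlimi_lim_ext_loc with (f := fun uv : R * R => Phi (fst uv) + - Phi (snd uv)).
  - apply (Filter_prod _ _ _ (fun u => t0 < u < m) (fun v => m < v < x)).
    + assert (Hr : 0 < m - t0) by (unfold m; lra).
      exists (mkposreal _ Hr). intros u Hu Htu. apply Rabs_lt_between' in Hu. simpl in Hu. lra.
    + assert (Hr : 0 < x - m) by (unfold m; lra).
      exists (mkposreal _ Hr). intros v Hv Hvx. apply Rabs_lt_between' in Hv. simpl in Hv. lra.
    + intros u v Hu Hv. simpl.
      replace (Phi u + - Phi v) with (RInt (sing_integrand h x) u v)
        by (rewrite RInt_sing_integrand by lra; reflexivity).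
      apply (RInt_correct (V := R_CompleteNormedModule)), ex_RInt_continuous_R.
      intros z Hz. rewrite Rmin_left, Rmax_right in Hz by lra.
      apply continuous_sing_integrand; lra.
  - replace (subst_integral h x (sqrt (x - t0))) with (Phi t0 + - Phi x)
      by (unfold Phi; rewrite Rminus_eq_0, sqrt_0, subst_integral_0; ring).
    apply (filterlim_comp_2 (G := locally (Phi t0)) (H := locally (- Phi x))
             (fun uv : R * R => Phi (fst uv)) (fun uv => - Phi (snd uv)) Rplus).
    + apply (filterlim_comp _ _ _ fst Phi _ (at_right t0)); [apply filterlim_fst|].
      apply (filterlim_filter_le_1 _ (filter_le_within _)), HPhi. lra.
    + apply (filterlim_comp _ _ _ snd (fun v => - Phi v) _ (at_left x));
        [apply filterlim_snd|].
      apply (filterlim_filter_le_1 _ (filter_le_within _)).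
      apply (@continuous_opp R_UniformSpace R_AbsRing R_NormedModule), HPhi. lra.
    + apply (filterlim_plus (V := R_NormedModule)).
Qed.

End Substitution.

Definition rho_kernel (_ t : R) : R := a t.
Definition chi_kernel (x t : R) : R := a x / a t.

Definition rhoW (x W : R) : R := subst_integral rho_kernel x W.
Definition chiW (x W : R) : R := subst_integral chi_kernel x W.

Lemma rho_kernel_diag_continuous p :
  continuous (fun q : R * R => rho_kernel (fst q) (fst q - snd q ^ 2)) p.
Proof.
  apply continuous_Rcomp; [|apply a_continuous].
  apply continuous_Rminus; [apply continuous_fst_R2 | apply continuous_pow, continuous_snd_R2].
Qed.

Lemma chi_kernel_continuous x t : 0 < x -> (1 - 1) * x < t -> continuous (chi_kernel x) t.
Proof.
  intros _ Ht. apply continuous_Rdiv; [apply continuous_const | apply a_continuous |].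
  apply Rgt_not_eq, a_pos. lra.
Qed.

Lemma chi_kernel_diag_continuous x w : 0 < x -> w ^ 2 < 1 * x ->
  continuous (fun p : R * R => chi_kernel (fst p) (fst p - snd p ^ 2)) (x, w).
Proof.
  intros _ Hw. apply continuous_Rdiv.
  - apply continuous_Rcomp; [apply continuous_fst_R2 | apply a_continuous].
  - apply continuous_Rcomp; [|apply a_continuous].
    apply continuous_Rminus; [apply continuous_fst_R2 | apply continuous_pow, continuous_snd_R2].
  - apply Rgt_not_eq, a_pos. simpl. lra.
Qed.

Lemma continuous_rhoW x W : 0 < x -> W ^ 2 < 2 * x ->
  continuous (fun p : R * R => rhoW (fst p) (snd p)) (x, W).
Proof.
  apply (continuous_subst_integral rho_kernel 2); [lra |].
  intros x' w' _ _. apply rho_kernel_diag_continuous.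
Qed.

Lemma continuous_chiW x W : 0 < x -> W ^ 2 < x ->
  continuous (fun p : R * R => chiW (fst p) (snd p)) (x, W).
Proof.
  intros Hx HW. apply (continuous_subst_integral chi_kernel 1);
    [lra | exact chi_kernel_diag_continuous | exact Hx | lra].
Qed.

Lemma rho_of_rhoW x t0 : 0 < x -> - x < t0 < x -> rho_of a x t0 = rhoW x (sqrt (x - t0)).
Proof.
  intros Hx Ht0. apply is_RInt_gen_unique.
  apply (is_RInt_gen_subst rho_kernel 2); [lra | | | exact Hx | lra].
  - intros x' t _ _. apply a_continuous.
  - intros x' w _ _. apply rho_kernel_diag_continuous.
Qed.

Lemma chi_chiW s x : 0 < s < x -> chi a s x = chiW x (sqrt (x - s)).
Proof.
  intros Hs. unfold chi, impint.
  replace (fun t => / a t * (a x / sqrt (a x ^ 2 - a t ^ 2))) with (sing_integrand chi_kernel x)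
    by (apply functional_extensionality; intros t; unfold sing_integrand, chi_kernel, Rdiv; ring).
  apply is_RInt_gen_unique.
  apply (is_RInt_gen_subst chi_kernel 1); [lra | exact chi_kernel_continuous |
    exact chi_kernel_diag_continuous | lra | lra].
Qed.

Lemma rhoW_sub x W1 W2 : 0 < x -> 0 <= W1 <= W2 -> W2 ^ 2 < 2 * x ->
  rhoW x W2 - rhoW x W1 = RInt (subst_integrand rho_kernel x) W1 W2.
Proof.
  apply (subst_integral_sub rho_kernel 2); [lra |].
  intros x' w _ _. apply rho_kernel_diag_continuous.
Qed.

Lemma continuous_rho_integrand x w : 0 < x -> w ^ 2 < 2 * x ->
  continuous (subst_integrand rho_kernel x) w.
Proof.
  intros Hx Hw. apply continuous_slice.
  apply (continuous_subst_integrand rho_kernel 2); [lra | | exact Hx | exact Hw].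
  intros x' w' _ _. apply rho_kernel_diag_continuous.
Qed.

Lemma rho_integrand_pos x w : 0 < x -> w ^ 2 < 2 * x -> w ^ 2 <> x ->
  0 < subst_integrand rho_kernel x w.
Proof.
  intros Hx Hw Hwx. unfold subst_integrand, rho_kernel.
  assert (0 < a (x - w ^ 2)) by (apply a_pos; lra).
  pose proof (sqrt_lt_R0 _ (sq_slope_pos x w Hx Hw)).
  apply Rdiv_lt_0_compat; lra.
Qed.

(* The integrand vanishes only at [w = sqrt x], so split there. *)
Lemma rhoW_lt x W1 W2 : 0 < x -> 0 <= W1 < W2 -> W2 ^ 2 < 2 * x -> rhoW x W1 < rhoW x W2.
Proof.
  intros Hx HW HW2.
  assert (Hs : 0 < sqrt x) by (apply sqrt_lt_R0, Hx).
  assert (Hpos : forall w1 w2, 0 <= w1 < w2 -> w2 <= W2 -> (w2 <= sqrt x \/ sqrt x <= w1) ->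
            rhoW x w1 < rhoW x w2).
  { intros w1 w2 Hw Hw2 Hside.
    assert (Hw2x : w2 ^ 2 < 2 * x) by (assert (w2 ^ 2 <= W2 ^ 2) by (apply pow_incr; lra); lra).
    enough (0 < rhoW x w2 - rhoW x w1) by lra.
    rewrite rhoW_sub by lra. apply RInt_gt_0; [lra | |].
    - intros z Hz. assert (z ^ 2 < w2 ^ 2) by nra.
      apply rho_integrand_pos; [exact Hx | lra |].
      intros Heq. assert (z = sqrt x) by (rewrite <- Heq, sqrt_pow2; lra). lra.
    - intros z Hz. apply continuous_rho_integrand; [exact Hx|].
      assert (z ^ 2 <= w2 ^ 2) by (apply pow_incr; lra). lra. }
  destruct (Rle_or_lt W2 (sqrt x)) as [Hle | Hgt]; [now apply Hpos; auto; lra|].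
  destruct (Rle_or_lt (sqrt x) W1) as [Hle | Hlt]; [now apply Hpos; auto; lra|].
  apply Rlt_trans with (rhoW x (sqrt x)); apply Hpos; lra.
Qed.

Lemma RInt_rho_integrand x u v : 0 < x -> - x < u <= v -> v < x ->
  RInt (sing_integrand rho_kernel x) u v = rhoW x (sqrt (x - u)) - rhoW x (sqrt (x - v)).
Proof.
  intros Hx Hu Hv. apply (RInt_sing_integrand rho_kernel 2); [lra | | | exact Hx | lra | exact Hv].
  - intros x' t _ _. apply a_continuous.
  - intros x' w _ _. apply rho_kernel_diag_continuous.
Qed.

Lemma rhoW_reflect x W : 0 < x -> sqrt x <= W -> W ^ 2 < 2 * x ->
  rhoW x W + rhoW x (sqrt (2 * x - W ^ 2)) = 2 * rhoW x (sqrt x).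
Proof.
  intros Hx HW HW2. pose proof (sqrt_pos x) as Hs.
  assert (HxW : x <= W ^ 2).
  { rewrite <- (pow2_sqrt x) by lra. apply pow_incr. lra. }
  set (b := W ^ 2 - x).
  assert (Hleft := RInt_rho_integrand x (- b) 0 Hx ltac:(unfold b; lra) Hx).
  assert (Hright := RInt_rho_integrand x 0 b Hx ltac:(unfold b; lra) ltac:(unfold b; lra)).
  rewrite RInt_even in Hleft.
  - replace (x - - b) with (W ^ 2) in Hleft by (unfold b; ring).
    replace (x - b) with (2 * x - W ^ 2) in Hright by (unfold b; ring).
    rewrite sqrt_pow2, Rminus_0_r in Hleft by lra. rewrite Rminus_0_r in Hright. lra.
  - intros t. unfold sing_integrand, rho_kernel. now rewrite a_even.
  - apply ex_RInt_continuous_R. intros z Hz.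
    rewrite Rmin_left, Rmax_right in Hz by (unfold b; lra).
    apply (continuous_sing_integrand rho_kernel 2); [lra | | exact Hx |].
    { intros x' t _ _; apply a_continuous. }
    unfold b in *. lra.
Qed.

Lemma rhoM_rhoW x : 0 < x -> rhoM a x = rhoW x (sqrt x).
Proof. intros Hx. unfold rhoM. rewrite rho_of_rhoW, Rminus_0_r by lra. reflexivity. Qed.

Lemma rhoW_surj x rho : 0 < x -> 0 < rho < 2 * rhoW x (sqrt x) ->
  exists W, 0 < W /\ W ^ 2 < 2 * x /\ rhoW x W = rho.
Proof.
  intros Hx Hrho.
  assert (Hs : 0 < sqrt x) by (apply sqrt_lt_R0, Hx).
  assert (Hcont : forall W, W ^ 2 < 2 * x -> continuous (rhoW x) W)
    by (intros W HW; apply continuous_slice, continuous_rhoW; assumption).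
  assert (Hrho0 : rhoW x 0 = 0) by apply subst_integral_0.
  (* a small [w] with [rhoW x w] close to 0, reflected to [W1] close to [sqrt (2 x)] *)
  destruct (proj1 (continuous_R_eps _ _) (Hcont 0 ltac:(simpl; lra)) (2 * rhoW x (sqrt x) - rho))
    as [d [Hd Hclose]]; [lra|].
  rewrite Hrho0 in Hclose.
  set (w := Rmin (d / 2) (sqrt x / 2)).
  assert (Hw : 0 < w <= sqrt x / 2) by (split; [apply Rmin_glb_lt | apply Rmin_r]; lra).
  assert (Hwd : w < d) by (eapply Rle_lt_trans; [apply Rmin_l | lra]).
  assert (Hwx : w ^ 2 < x) by (rewrite <- (pow2_sqrt x) by lra; nra).
  assert (Hsmall : rhoW x w < 2 * rhoW x (sqrt x) - rho).
  { specialize (Hclose w ltac:(rewrite Rminus_0_r, Rabs_pos_eq; lra)).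
    rewrite Rminus_0_r in Hclose. eapply Rle_lt_trans; [apply RRle_abs | exact Hclose]. }
  set (W1 := sqrt (2 * x - w ^ 2)).
  assert (HW1 : W1 ^ 2 = 2 * x - w ^ 2) by (apply pow2_sqrt; lra).
  assert (HW1s : sqrt x <= W1) by (apply sqrt_le_1_alt; lra).
  assert (HW12 : W1 ^ 2 < 2 * x) by (pose proof (pow2_gt_0 w ltac:(lra)); lra).
  pose proof (rhoW_reflect x W1 Hx HW1s HW12) as Hrefl.
  rewrite HW1 in Hrefl. replace (2 * x - (2 * x - w ^ 2)) with (w ^ 2) in Hrefl by ring.
  rewrite sqrt_pow2 in Hrefl by lra.
  destruct (Ranalysis5.IVT_interv (fun W => rhoW x W - rho) 0 W1) as [z [Hz Hz0]]; [| lra | lra | lra |].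
  { intros W HW. apply continuity_pt_filterlim, continuous_Rminus;
      [apply Hcont | apply continuous_const].
    assert (W ^ 2 <= W1 ^ 2) by (apply pow_incr; lra). lra. }
  exists z. repeat split.
  - destruct (Req_dec z 0) as [-> | Hz']; [rewrite Hrho0 in Hz0; lra | lra].
  - assert (z ^ 2 <= W1 ^ 2) by (apply pow_incr; lra). lra.
  - lra.
Qed.

Lemma rhoW_le x W1 W2 : 0 < x -> 0 <= W1 <= W2 -> W2 ^ 2 < 2 * x -> rhoW x W1 <= rhoW x W2.
Proof.
  intros Hx HW HW2. destruct (Req_dec W1 W2) as [-> | Hne]; [lra|].
  left; apply rhoW_lt; [exact Hx | lra | exact HW2].
Qed.

Lemma rhoW_inj x W1 W2 : 0 < x -> 0 <= W1 -> 0 <= W2 -> W1 ^ 2 < 2 * x -> W2 ^ 2 < 2 * x ->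
  rhoW x W1 = rhoW x W2 -> W1 = W2.
Proof.
  intros Hx H1 H2 H1x H2x E. destruct (Rtotal_order W1 W2) as [L | [L | L]]; [| exact L |].
  - pose proof (rhoW_lt x W1 W2 Hx ltac:(lra) H2x); lra.
  - pose proof (rhoW_lt x W2 W1 Hx ltac:(lra) H1x); lra.
Qed.

Definition rho_range (x rho : R) : Prop := 0 < x /\ 0 < rho < 2 * rhoM a x.

Definition W_of (x rho : R) : R := sqrt (x - t0fun a x rho).

Lemma t0fun_spec x rho : rho_range x rho ->
  - x < t0fun a x rho < x /\ rho_of a x (t0fun a x rho) = rho.
Proof.
  intros [Hx Hrho]. unfold t0fun. apply epsilon_spec.
  rewrite rhoM_rhoW in Hrho by exact Hx.
  destruct (rhoW_surj x rho Hx Hrho) as [W [HW [HW2 E]]].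
  exists (x - W ^ 2). assert (0 < W ^ 2) by (apply pow_lt, HW).
  split; [lra|]. rewrite rho_of_rhoW by lra.
  replace (x - (x - W ^ 2)) with (W ^ 2) by ring. rewrite sqrt_pow2; lra.
Qed.

Lemma W_of_spec x rho : rho_range x rho ->
  0 < W_of x rho /\ W_of x rho ^ 2 < 2 * x /\ rhoW x (W_of x rho) = rho /\
  t0fun a x rho = x - W_of x rho ^ 2.
Proof.
  intros Hr. destruct (t0fun_spec x rho Hr) as [Ht E]. destruct Hr as [Hx _].
  unfold W_of. rewrite rho_of_rhoW in E by lra. rewrite pow2_sqrt by lra.
  repeat split; [apply sqrt_lt_R0 | | exact E |]; lra.
Qed.

Lemma rhoM_pos x : 0 < x -> 0 < rhoM a x.
Proof.
  intros Hx. rewrite rhoM_rhoW, <- (subst_integral_0 rho_kernel x) by exact Hx.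
  apply rhoW_lt; [exact Hx | pose proof (sqrt_lt_R0 x Hx); lra | rewrite pow2_sqrt; lra].
Qed.

Lemma t0fun_rhoM x : 0 < x -> t0fun a x (rhoM a x) = 0.
Proof.
  intros Hx. assert (Hr : rho_range x (rhoM a x)) by (pose proof (rhoM_pos x Hx); split; lra).
  destruct (W_of_spec x _ Hr) as (HW & HW2 & E & ->).
  set (W := W_of x (rhoM a x)) in *. rewrite rhoM_rhoW in E by exact Hx.
  apply rhoW_inj in E; [| exact Hx | lra | apply sqrt_pos | exact HW2 | rewrite pow2_sqrt; lra].
  rewrite E, pow2_sqrt; lra.
Qed.

Lemma W_of_between x rho W1 W2 : rho_range x rho -> 0 <= W1 <= W2 -> W2 ^ 2 < 2 * x ->
  rhoW x W1 < rho < rhoW x W2 -> W1 < W_of x rho < W2.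
Proof.
  intros Hr HW12 HW2 [Hlo Hhi]. pose proof Hr as [Hx _].
  destruct (W_of_spec x rho Hr) as (HW & HWx & Hrho & _).
  assert (W1 ^ 2 <= W2 ^ 2) by (apply pow_incr; lra).
  split; apply Rnot_le_lt; intros L.
  - pose proof (rhoW_le x (W_of x rho) W1 Hx ltac:(lra) ltac:(lra)). lra.
  - pose proof (rhoW_le x W2 (W_of x rho) Hx ltac:(lra) HWx). lra.
Qed.

Lemma W_of_continuous x0 rho0 : rho_range x0 rho0 ->
  forall eta, 0 < eta -> exists d, 0 < d /\ forall x rho,
    Rabs (x - x0) < d -> Rabs (rho - rho0) < d -> rho_range x rho ->
    Rabs (W_of x rho - W_of x0 rho0) < eta.
Proof.
  intros Hr0 eta Heta. pose proof Hr0 as [Hx0 _].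
  destruct (W_of_spec x0 rho0 Hr0) as (HW0 & HW02 & Hrho0 & _).
  set (W0 := W_of x0 rho0) in *.
  set (s2 := sqrt (2 * x0)).
  assert (Hs2 : s2 ^ 2 = 2 * x0) by (apply pow2_sqrt; lra).
  assert (HWs : W0 < s2).
  { apply Rnot_le_lt; intros L.
    assert (s2 ^ 2 <= W0 ^ 2) by (apply pow_incr; split; [apply sqrt_pos | exact L]). lra. }
  set (e := Rmin eta (Rmin (W0 / 2) ((s2 - W0) / 2))).
  assert (He : 0 < e) by (unfold e; repeat apply Rmin_glb_lt; lra).
  assert (He1 : e <= eta) by apply Rmin_l.
  assert (He2 : e <= W0 / 2) by (eapply Rle_trans; [apply Rmin_r | apply Rmin_l]).
  assert (He3 : e <= (s2 - W0) / 2) by (eapply Rle_trans; [apply Rmin_r | apply Rmin_r]).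
  assert (Hup : (W0 + e) ^ 2 < 2 * x0)
    by (rewrite <- Hs2; assert (0 <= W0 + e < s2) by lra; nra).
  assert (Hlo : (W0 - e) ^ 2 < 2 * x0) by nra.
  destruct (continuous_bracket rhoW x0 (W0 - e) (W0 + e) rho0) as [d1 [Hd1 Hbr]].
  { rewrite <- Hrho0. split; apply rhoW_lt; lra. }
  { apply continuous_rhoW; assumption. }
  { apply continuous_rhoW; assumption. }
  set (d2 := (2 * x0 - (W0 + e) ^ 2) / 4).
  exists (Rmin d1 d2). split; [apply Rmin_glb_lt; unfold d2; lra|].
  intros x rho [Hx1 Hx2]%Rmin_Rgt_l [Hrho1 _]%Rmin_Rgt_l Hr.
  apply Rabs_lt_between' in Hx2. unfold d2 in Hx2.
  destruct (W_of_between x rho (W0 - e) (W0 + e) Hr) as [B1 B2]; [lra | lra | now apply Hbr|].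
  apply Rabs_lt_between'. lra.
Qed.

Lemma t0fun_continuous x0 rho0 : rho_range x0 rho0 ->
  forall eps, 0 < eps -> exists d, 0 < d /\ forall x rho,
    Rabs (x - x0) < d -> Rabs (rho - rho0) < d -> rho_range x rho ->
    Rabs (t0fun a x rho - t0fun a x0 rho0) < eps.
Proof.
  intros Hr0 eps Heps.
  destruct (W_of_spec x0 rho0 Hr0) as (HW0 & _ & _ & E0).
  set (W0 := W_of x0 rho0) in *.
  set (eta := Rmin 1 (eps / (2 * (2 * W0 + 1)))).
  assert (Heta : 0 < eta) by (apply Rmin_glb_lt; [lra | apply Rdiv_lt_0_compat; lra]).
  assert (He1 : eta <= 1) by apply Rmin_l.
  assert (He2 : eta * (2 * W0 + 1) <= eps / 2).
  { apply Rle_trans with (eps / (2 * (2 * W0 + 1)) * (2 * W0 + 1));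
      [apply Rmult_le_compat_r; [lra | apply Rmin_r] | right; field; lra]. }
  destruct (W_of_continuous x0 rho0 Hr0 eta Heta) as [d [Hd HW]].
  exists (Rmin d (eps / 2)). split; [apply Rmin_glb_lt; lra|].
  intros x rho [Hx1 Hx2]%Rmin_Rgt_l [Hrho1 _]%Rmin_Rgt_l Hr.
  specialize (HW x rho Hx1 Hrho1 Hr). fold W0 in HW.
  destruct (W_of_spec x rho Hr) as (HWx & _ & _ & E).
  rewrite E, E0.
  replace (x - W_of x rho ^ 2 - (x0 - W0 ^ 2)) with
    ((x - x0) - (W_of x rho - W0) * (W_of x rho + W0)) by ring.
  assert (Hprod : Rabs ((W_of x rho - W0) * (W_of x rho + W0)) <= eta * (2 * W0 + 1)).
  { rewrite Rabs_mult. apply Rmult_le_compat; try apply Rabs_pos; [lra|].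
    apply Rabs_lt_between' in HW. rewrite Rabs_pos_eq; lra. }
  unfold Rminus at 1. eapply Rle_lt_trans; [apply Rabs_triang|]. rewrite Rabs_Ropp. lra.
Qed.

Lemma continuous_inv_a t : t <> 0 -> continuous (fun t => / a t) t.
Proof. intros Ht. apply continuous_Rinv_comp; [apply a_continuous | apply Rgt_not_eq, a_pos, Ht]. Qed.

Lemma ex_RInt_inv_a u v : 0 < u <= v -> ex_RInt (fun t => / a t) u v.
Proof.
  intros Huv. apply ex_RInt_continuous_R. intros z Hz.
  rewrite Rmin_left, Rmax_right in Hz by lra. apply continuous_inv_a. lra.
Qed.

Lemma chi_sub_le x s c : 0 < s < c -> c < x ->
  0 <= chi a s x - chiW x (sqrt (x - c)) <=
  a x / sqrt (a x ^ 2 - a c ^ 2) * RInt (fun t => / a t) s c.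
Proof.
  intros Hs Hc.
  assert (Hdiff : chi a s x - chiW x (sqrt (x - c)) = RInt (sing_integrand chi_kernel x) s c).
  { rewrite chi_chiW by lra. symmetry.
    apply (RInt_sing_integrand chi_kernel 1); [lra | exact chi_kernel_continuous |
      exact chi_kernel_diag_continuous | lra | lra | lra]. }
  assert (Hex : ex_RInt (sing_integrand chi_kernel x) s c).
  { apply ex_RInt_continuous_R. intros z Hz. rewrite Rmin_left, Rmax_right in Hz by lra.
    apply (continuous_sing_integrand chi_kernel 1); [lra | exact chi_kernel_continuous | lra | lra]. }
  assert (HD : 0 < a x ^ 2 - a c ^ 2).
  { enough (a c ^ 2 < a x ^ 2) by lra. apply a_sqr_lt. rewrite !Rabs_pos_eq; lra. }
  pose proof (sqrt_lt_R0 _ HD) as HsD. pose proof (a_pos x ltac:(lra)) as Hax.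
  assert (Hpt : forall t, s < t < c -> 0 <= sing_integrand chi_kernel x t <=
                  a x / sqrt (a x ^ 2 - a c ^ 2) * / a t).
  { intros t Ht. unfold sing_integrand, chi_kernel.
    assert (Hat : 0 < a t) by (apply a_pos; lra).
    assert (Hatc : a t <= a c) by (apply a_le_abs; rewrite !Rabs_pos_eq; lra).
    assert (HsDt : sqrt (a x ^ 2 - a c ^ 2) <= sqrt (a x ^ 2 - a t ^ 2))
      by (apply sqrt_le_1_alt; nra).
    replace (a x / a t / sqrt (a x ^ 2 - a t ^ 2)) with
      (a x * / a t * / sqrt (a x ^ 2 - a t ^ 2)) by (unfold Rdiv; ring).
    replace (a x / sqrt (a x ^ 2 - a c ^ 2) * / a t) with
      (a x * / a t * / sqrt (a x ^ 2 - a c ^ 2)) by (unfold Rdiv; ring).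
    assert (0 < a x * / a t) by (apply Rmult_lt_0_compat; [lra | apply Rinv_0_lt_compat, Hat]).
    split.
    - apply Rmult_le_pos; [lra | apply Rlt_le, Rinv_0_lt_compat; lra].
    - apply Rmult_le_compat_l; [lra | apply Rinv_le_contravar; lra]. }
  rewrite Hdiff. split.
  - apply RInt_ge_0; [lra | exact Hex | intros t Ht; apply Hpt, Ht].
  - rewrite <- (RInt_scal (V := R_CompleteNormedModule)) by (apply ex_RInt_inv_a; lra).
    apply RInt_le; [lra | exact Hex | | intros t Ht; apply Hpt, Ht].
    apply ex_RInt_continuous_R. intros z Hz. rewrite Rmin_left, Rmax_right in Hz by lra.
    apply continuous_Rmult; [apply continuous_const | apply continuous_inv_a; lra].
Qed.

Section FiniteHorizon.
Hypothesis Hhor : finite_particle_horizon a.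

Lemma horizon_bound c : 0 < c ->
  exists M, forall s, 0 < s < c -> RInt (fun t => / a t) s c <= M.
Proof.
  intros Hc. destruct (Hhor c Hc) as [l Hl].
  destruct (Hl _ (locally_ball l (mkposreal 1 Rlt_0_1))) as [Q P HQ HP HQP].
  destruct HQ as [d Hd].
  exists (l + 1). intros s Hs.
  set (u := Rmin s (d / 2)).
  assert (Hu : 0 < u <= s) by (split; [apply Rmin_glb_lt; pose proof (cond_pos d) | apply Rmin_l]; lra).
  assert (Qu : Q u).
  { apply Hd; [| lra]. apply Rabs_lt_between'. pose proof (Rmin_r s (d / 2)).
    pose proof (cond_pos d). unfold u in *. lra. }
  destruct (HQP u c Qu HP) as [y [Hy Hly]]. simpl in Hy.
  apply Rabs_lt_between' in Hly. simpl in Hly.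
  pose proof (RInt_Chasles (fun t => / a t) u s c
    (ex_RInt_inv_a u s ltac:(lra)) (ex_RInt_inv_a s c ltac:(lra))) as Hch.
  rewrite (is_RInt_unique _ _ _ _ Hy) in Hch. change (plus ?A ?B) with (A + B) in Hch.
  enough (0 <= RInt (fun t => / a t) u s) by lra.
  apply RInt_ge_0; [lra | apply ex_RInt_inv_a; lra |].
  intros t Ht. apply Rlt_le, Rinv_0_lt_compat, a_pos. lra.
Qed.

Lemma chi_bound tau0 : 0 < tau0 -> exists d B, 0 < d /\ forall x s,
  Rabs (x - tau0) < d -> 0 < s < tau0 / 4 -> Rabs (chi a s x) <= B.
Proof.
  intros Ht0. set (c := tau0 / 2).
  destruct (horizon_bound c ltac:(unfold c; lra)) as [M HM].
  set (K x := a x / sqrt (a x ^ 2 - a c ^ 2)).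
  assert (HD : forall x, c < x -> 0 < a x ^ 2 - a c ^ 2).
  { intros x Hx. enough (a c ^ 2 < a x ^ 2) by lra.
    apply a_sqr_lt. rewrite !Rabs_pos_eq; unfold c in *; lra. }
  set (Bfun x := Rabs (chiW x (sqrt (x - c))) + K x * M).
  assert (HB : continuous Bfun tau0).
  { apply continuous_Rplus.
    - apply (continuous_Rcomp (fun x => chiW x (sqrt (x - c))) Rabs); [|apply continuous_Rabs].
      apply (continuous_comp_2 (fun x => x) (fun x => sqrt (x - c)) chiW).
      + apply continuous_id.
      + apply continuous_sqrt_comp, continuous_Rminus; [apply continuous_id | apply continuous_const].
      + apply continuous_chiW; [lra | rewrite pow2_sqrt; unfold c; lra].
    - apply continuous_Rmult; [|apply continuous_const]. apply continuous_Rdiv.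
      + apply a_continuous.
      + apply continuous_sqrt_comp, continuous_Rminus;
          [apply continuous_pow, a_continuous | apply continuous_const].
      + apply Rgt_not_eq, sqrt_lt_R0, HD. unfold c; lra. }
  destruct (proj1 (continuous_R_eps _ _) HB 1 Rlt_0_1) as [d [Hd HBd]].
  exists (Rmin d (tau0 / 4)), (Bfun tau0 + 1). split; [apply Rmin_glb_lt; lra|].
  intros x s [Hx1 Hx2]%Rmin_Rgt_l Hs.
  apply Rabs_lt_between' in Hx2.
  destruct (chi_sub_le x s c) as [Hlo Hhi]; [unfold c; lra | unfold c; lra |].
  assert (HK : 0 <= K x) by
    (apply Rlt_le, Rdiv_lt_0_compat; [apply a_pos | apply sqrt_lt_R0, HD]; unfold c; lra).
  assert (HKM : K x * RInt (fun t => / a t) s c <= K x * M)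
    by (apply Rmult_le_compat_l; [exact HK | apply HM; unfold c; lra]).
  specialize (HBd x Hx1). apply Rabs_lt_between' in HBd.
  pose proof (Rabs_triang_inv (chi a s x) (chiW x (sqrt (x - c)))) as Htri.
  rewrite (Rabs_pos_eq (chi a s x - _)) in Htri by exact Hlo.
  unfold Bfun, K in *. lra.
Qed.

Lemma angular_limit_eps k tau0 : 0 < tau0 -> forall eps, 0 < eps ->
  exists r, 0 < r /\ forall x t, Rabs (x - tau0) < r -> Rabs t < r -> t <> 0 ->
    Rabs (a t ^ 2 * Sk k (chi a (Rabs t) x) ^ 2) < eps.
Proof.
  intros Ht0 eps Heps.
  destruct (chi_bound tau0 Ht0) as [d [B [Hd HB]]].
  destruct (Sk_sqr_bounded k B) as [C [HC0 HC]].
  assert (Ha2 : continuous (fun t => a t ^ 2) 0) by apply continuous_pow, a_continuous.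
  destruct (proj1 (continuous_R_eps _ _) Ha2 (eps / (C + 1))) as [da [Hda Hsmall]];
    [apply Rdiv_lt_0_compat; lra|].
  rewrite a_0 in Hsmall.
  exists (Rmin d (Rmin (tau0 / 4) da)). split; [repeat apply Rmin_glb_lt; lra|].
  intros x t [Hx' _]%Rmin_Rgt_l [_ [Ht1 Ht2]%Rmin_Rgt_l]%Rmin_Rgt_l Hnz.
  rewrite <- (Rminus_0_r t) in Ht2.
  assert (Hchi : Sk k (chi a (Rabs t) x) ^ 2 <= C).
  { apply HC, HB; [exact Hx' | split; [apply Rabs_pos_lt, Hnz | exact Ht1]]. }
  specialize (Hsmall t Ht2).
  replace (a t ^ 2 - 0 ^ 2) with (a t ^ 2) in Hsmall by ring.
  rewrite Rabs_pos_eq in Hsmall by apply pow2_ge_0.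
  pose proof (pow2_ge_0 (a t)). pose proof (pow2_ge_0 (Sk k (chi a (Rabs t) x))).
  rewrite Rabs_pos_eq by (apply Rmult_le_pos; assumption).
  apply Rle_lt_trans with (a t ^ 2 * (C + 1)); [apply Rmult_le_compat_l; lra|].
  replace eps with (eps / (C + 1) * (C + 1)) by (field; lra).
  apply Rmult_lt_compat_r; lra.
Qed.

Lemma angular_limit k tau0 : 0 < tau0 ->
  filterlim (fun p : R * R => a (snd p) ^ 2 * Sk k (chi a (Rabs (snd p)) (fst p)) ^ 2)
    (within (fun p : R * R => snd p <> 0) (locally (tau0, 0))) (locally 0).
Proof.
  intros Ht0. apply filterlim_locally. intros eps.
  destruct (angular_limit_eps k tau0 Ht0 eps (cond_pos eps)) as [r [Hr Hlim]].
  exists (mkposreal r Hr). intros [x t] [Hx Ht] Hnz. simpl in Hnz.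
  change (Rabs (x - tau0) < r) in Hx. change (Rabs (t - 0) < r) in Ht.
  change (Rabs (a t ^ 2 * Sk k (chi a (Rabs t) x) ^ 2 - 0) < eps).
  rewrite Rminus_0_r in Ht |- *. apply Hlim; assumption.
Qed.

Definition gthth_t0 (k : Z) (p : R * R) : R :=
  a (snd p) ^ 2 * Sk k (chiW (fst p) (sqrt (fst p - Rabs (snd p)))) ^ 2.

Lemma continuous_gthth_t0 k x T : 0 < x -> T <> 0 -> Rabs T < x ->
  continuous (gthth_t0 k) (x, T).
Proof.
  intros Hx HT HTx. unfold gthth_t0.
  apply continuous_Rmult; apply continuous_pow.
  - apply continuous_Rcomp; [apply continuous_snd_R2 | apply a_continuous].
  - apply (continuous_Rcomp (fun p : R * R => chiW (fst p) (sqrt (fst p - Rabs (snd p))))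
      (Sk k)); [|apply Sk_continuous].
    apply (continuous_comp_2 (fun p : R * R => fst p) (fun p => sqrt (fst p - Rabs (snd p))) chiW).
    + apply continuous_fst_R2.
    + apply continuous_sqrt_comp, continuous_Rminus; [apply continuous_fst_R2|].
      apply continuous_Rcomp; [apply continuous_snd_R2 | apply continuous_Rabs].
    + pose proof (Rabs_pos_lt T HT).
      apply continuous_chiW; [exact Hx | cbn [fst snd]; rewrite pow2_sqrt; lra].
Qed.

Lemma g_thth_t0 k x rho : rho_range x rho -> t0fun a x rho <> 0 ->
  g_thth a k x rho = gthth_t0 k (x, t0fun a x rho).
Proof.
  intros Hr Hnz. destruct (t0fun_spec x rho Hr) as [Ht _].
  unfold g_thth, gthth_t0. simpl. destruct Req_EM_T as [E | _]; [contradiction|].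
  rewrite chi_chiW; [reflexivity|]. split; [apply Rabs_pos_lt, Hnz | apply Rabs_lt_between; lra].
Qed.

Lemma g_thth_continuous_eps k x0 rho0 : rho_range x0 rho0 ->
  forall eps, 0 < eps -> exists d, 0 < d /\ forall x rho,
    Rabs (x - x0) < d -> Rabs (rho - rho0) < d -> rho_range x rho ->
    Rabs (g_thth a k x rho - g_thth a k x0 rho0) < eps.
Proof.
  intros Hr0 eps Heps. pose proof Hr0 as [Hx0 _].
  destruct (t0fun_spec x0 rho0 Hr0) as [HT0 _].
  set (T0 := t0fun a x0 rho0) in *.
  destruct (Req_dec T0 0) as [HZ | HNZ].
  - assert (HG0 : g_thth a k x0 rho0 = 0)
      by (unfold g_thth; fold T0; destruct Req_EM_T; [reflexivity | contradiction]).
    rewrite HG0.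
    destruct (angular_limit_eps k x0 Hx0 eps Heps) as [r [Hr Hlim]].
    destruct (t0fun_continuous x0 rho0 Hr0 r Hr) as [d [Hd Ht0]].
    exists (Rmin d r). split; [apply Rmin_glb_lt; lra|].
    intros x rho [Hx1 Hx2]%Rmin_Rgt_l [Hrho1 _]%Rmin_Rgt_l Hr'.
    specialize (Ht0 x rho Hx1 Hrho1 Hr'). fold T0 in Ht0. rewrite HZ, Rminus_0_r in Ht0.
    rewrite Rminus_0_r. unfold g_thth.
    destruct Req_EM_T; [rewrite Rabs_R0; lra | apply Hlim; assumption].
  - assert (HT0x : Rabs T0 < x0) by (apply Rabs_lt_between; lra).
    destruct (proj1 (continuous_R2_eps _ _ _) (continuous_gthth_t0 k x0 T0 Hx0 HNZ HT0x) eps Heps)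
      as [dG [HdG HG]].
    pose proof (Rabs_pos_lt T0 HNZ) as HT0p.
    destruct (t0fun_continuous x0 rho0 Hr0 (Rmin dG (Rabs T0 / 2))) as [d [Hd Ht0]];
      [apply Rmin_glb_lt; lra|].
    exists (Rmin d dG). split; [apply Rmin_glb_lt; lra|].
    intros x rho [Hx1 Hx2]%Rmin_Rgt_l [Hrho1 _]%Rmin_Rgt_l Hr'.
    specialize (Ht0 x rho Hx1 Hrho1 Hr'). fold T0 in Ht0.
    apply Rmin_Rgt_l in Ht0 as [Ht1 Ht2].
    assert (Hnz : t0fun a x rho <> 0).
    { intros E. rewrite E, Rminus_0_l, Rabs_Ropp in Ht2. lra. }
    rewrite (g_thth_t0 k x rho Hr' Hnz), (g_thth_t0 k x0 rho0 Hr0 HNZ).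
    apply HG; assumption.
Qed.

End FiniteHorizon.

Lemma rho_max_lt x rho : rho < rho_max a x -> rho < 2 * rhoM a x.
Proof.
  unfold rho_max. destruct excluded_middle_informative as [[r Hr] | _]; [|exact (fun H => H)].
  destruct (Glb_Rbar_correct (rho_max_set a x)) as [Hlb Hglb].
  assert (L1 := Hlb r Hr).
  assert (L2 : Rbar_le (Finite 0) (Glb_Rbar (rho_max_set a x))).
  { apply Hglb. intros y [[Hy _] _]. simpl. lra. }
  destruct Hr as [[_ Hr2] _].
  destruct (Glb_Rbar (rho_max_set a x)); simpl in *; try contradiction. lra.
Qed.

Lemma D_polar_rho_range th1 ph1 p : D_polar a th1 ph1 p ->
  rho_range (fst (fst (fst p))) (snd (fst (fst p))).
Proof.
  destruct p as [[[x rho] th] ph]. intros (Hx & [Hrho Hmax] & _). simpl.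
  split; [exact Hx | split; [exact Hrho | now apply rho_max_lt]].
Qed.

Section Polar.
Hypothesis Hhor : finite_particle_horizon a.
Variables (k : Z) (th1 ph1 : R).

Lemma g_thth_continuous p : D_polar a th1 ph1 p ->
  filterlim (fun q : R * R * R * R => g_thth a k (fst (fst (fst q))) (snd (fst (fst q))))
    (within (D_polar a th1 ph1) (locally p))
    (locally (g_thth a k (fst (fst (fst p))) (snd (fst (fst p))))).
Proof.
  intros Hp. apply filterlim_locally. intros eps.
  destruct (g_thth_continuous_eps Hhor k _ _ (D_polar_rho_range th1 ph1 p Hp) eps (cond_pos eps))
    as [d [Hd Hc]].
  exists (mkposreal d Hd). intros q Hq HDq.
  destruct p as [[[x0 rho0] th0] ph0], q as [[[x rho] th] ph].
  destruct Hq as [[[Hx Hrho] _] _].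
  apply Hc; [exact Hx | exact Hrho | exact (D_polar_rho_range th1 ph1 _ HDq)].
Qed.

Lemma g_phph_continuous p : D_polar a th1 ph1 p ->
  filterlim (fun q : R * R * R * R =>
               g_phph a k (fst (fst (fst q))) (snd (fst (fst q))) (snd (fst q)))
    (within (D_polar a th1 ph1) (locally p))
    (locally (g_phph a k (fst (fst (fst p))) (snd (fst (fst p))) (snd (fst p)))).
Proof.
  intros Hp. unfold g_phph.
  apply (filterlim_comp_2 (H := locally (sin (snd (fst p)) ^ 2)) _ _ Rmult
           (g_thth_continuous p Hp)); [|apply (@filterlim_mult R_AbsRing)].
  assert (Hsin : continuous (fun q : R * R * R * R => sin (snd (fst q)) ^ 2) p).
  { apply continuous_pow, (continuous_Rcomp (fun q : R * R * R * R => snd (fst q)) sin);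
      [|apply continuous_sin].
    apply (continuous_comp (fun q : R * R * R * R => fst q) snd);
      [apply continuous_fst | apply continuous_snd]. }
  exact (filterlim_filter_le_1 _ (filter_le_within _) Hsin).
Qed.

End Polar.

Lemma g_thth_rhoM k tau : 0 < tau -> g_thth a k tau (rhoM a tau) = 0.
Proof.
  intros Htau. unfold g_thth. rewrite t0fun_rhoM by exact Htau.
  destruct Req_EM_T; [reflexivity | congruence].
Qed.

End ScaleFactor.

Theorem theorem7p1 (k : Z) (a : R -> R) :
  (k = (-1)%Z \/ k = 0%Z \/ k = 1%Z) ->
  regular_scale_factor a ->
  finite_particle_horizon a ->
  (forall tau0, 0 < tau0 ->
     filterlim
       (fun p : R * R => (a (snd p)) ^ 2 * (Sk k (chi a (Rabs (snd p)) (fst p))) ^ 2)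
       (within (fun p : R * R => snd p <> 0) (locally (tau0, 0)))
       (locally 0)) /\
  (forall th1 ph1 (p : R * R * R * R), D_polar a th1 ph1 p ->
     filterlim (fun q : R * R * R * R => g_thth a k (fst (fst (fst q))) (snd (fst (fst q))))
       (within (D_polar a th1 ph1) (locally p))
       (locally (g_thth a k (fst (fst (fst p))) (snd (fst (fst p)))))
     /\
     filterlim (fun q : R * R * R * R =>
                  g_phph a k (fst (fst (fst q))) (snd (fst (fst q))) (snd (fst q)))
       (within (D_polar a th1 ph1) (locally p))
       (locally (g_phph a k (fst (fst (fst p))) (snd (fst (fst p))) (snd (fst p))))) /\
  (forall tau, 0 < tau ->
     g_thth a k tau (rhoM a tau) = 0 /\
     forall theta, g_phph a k tau (rhoM a tau) theta = 0).
Proof.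
  intros _ Ha Hhor. split; [|split].
  - intros tau0 Htau0. exact (angular_limit a Ha Hhor k tau0 Htau0).
  - intros th1 ph1 p Hp.
    split; [apply g_thth_continuous | apply g_phph_continuous]; assumption.
  - intros tau Htau. pose proof (g_thth_rhoM a Ha k tau Htau) as H0.
    split; [exact H0 | intros theta; unfold g_phph; rewrite H0; ring].
Qed.
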